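(* Consider the following MIMO flat-fading model. Fix integers $l_{\mathrm t},l_{\mathrm r},n\ge 1$ and a known pilot matrix $S=[s_{t,k}]\in\mathbb{C}^{n\times l_{\mathrm t}}$. Let $\vec{\mathbf h}\in\mathbb{C}^{l_{\mathrm r}l_{\mathrm t}}$ (entries $h_{r,t}$) be circularly symmetric complex Gaussian $\mathcal{CN}(\vec\mu_{\vec{\mathbf h}},\Sigma_{\vec{\mathbf h}})$ with $\Sigma_{\vec{\mathbf h}}$ positive definite, let $\mathbf f_\delta\sim\mathcal N(\mu_{\mathbf f_\delta},\sigma_{\mathbf f_\delta}^2)$ be real, let the noise entries $n_{r,k}$ be i.i.d. $\mathcal{CN}(0,1)$, with $\vec{\mathbf h},\mathbf f_\delta,\vec{\mathbf n}$ mutually independent, and observe $\vec{\mathbf y}=\grave X(\mathbf f_\delta)\vec{\mathbf h}+\vec{\mathbf n}$, i.e. $y_{r,k}=e^{j2\pi \mathbf f_\delta (k-1)}\sum_{t=1}^{l_{\mathrm t}}s_{t,k}h_{r,t}+n_{r,k}$. Then for every observation $\vec y\in\mathbb{C}^{nl_{\mathrm r}}$, $$\arg\max_{f_\delta\in\mathbb R} f_{\vec{\mathbf y}|\mathbf f_\delta}(\vec y\,|\,f_\delta)\,f_{\mathbf f_\delta}(f_\delta)=\arg\max_{f_\delta\in\mathbb R} g(\vec y,f_\delta),$$ where $$g(\vec y,f_\delta)=2\,\mathrm{Re}\big[\langle \grave X(f_\delta)^\dagger\vec y,\vec b\rangle\big]+\big(\grave X(f_\delta)^\dagger\vec y\big)^\dagger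 A\big(\grave X(f_\delta)^\dagger\vec y\big)-\tfrac12\sigma_{\mathbf f_\delta}^{-2}\,|f_\delta-\mu_{\mathbf f_\delta}|^2 ,$$ with $A=(\grave S^\dagger\grave S+\Sigma_{\vec{\mathbf h}}^{-1})^{-1}$ (which equals $(\Sigma_{\vec{\mathbf h}}^{-1}+\frac{n\rho}{l_{\mathrm t}}I)^{-1}$ when $S^\dagger S=\frac{n\rho}{l_{\mathrm t}}I_{l_{\mathrm t}}$) and $\vec b=(I-A\grave X(f_\delta)^\dagger\grave X(f_\delta))\vec\mu_{\vec{\mathbf h}}=(I-A\grave S^\dagger\grave S)\vec\mu_{\vec{\mathbf h}}$; $A$ and $\vec b$ do not depend on $f_\delta$. Moreover, the maximum likelihood estimator $\arg\max_{f_\delta} f_{\vec{\mathbf y}|\mathbf f_\delta}(\vec y|f_\delta)$ is obtained by maximizing the same function $g$ with $\sigma_{\mathbf f_\delta}^{-2}$ set to $0$.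
   Context: Notation: $l_{\mathrm t}$ transmit antennas, $l_{\mathrm r}$ receive antennas, $n$ symbol times. $\vec{\mathbf h}$ stacks $h_{r,t}$ (channel from transmit antenna $t$ to receive antenna $r$) with $h_{r,t}$ in position $(r-1)l_{\mathrm t}+t$; $\vec{\mathbf y}$ and $\vec{\mathbf n}$ stack $y_{r,k},n_{r,k}$ with index $(r,k)$ in position $(r-1)n+k$. $\rho=\frac1n\mathrm{Tr}(S^\dagger S)$. $F(f)=\mathrm{diag}\big(e^{j2\pi f(k-1)}\big)_{k=1,\dots,n}$, $X(f)=F(f)S$, $\grave X(f)=I_{l_{\mathrm r}}\otimes X(f)$ (block diagonal with $l_{\mathrm r}$ copies of $X(f)$), $\grave S=I_{l_{\mathrm r}}\otimes S$. $f_{\vec{\mathbf y}|\mathbf f_\delta}$ is the conditional density of $\vec{\mathbf y}$ given $\mathbf f_\delta$ and $f_{\mathbf f_\delta}$ the Gaussian prior density of $\mathbf f_\delta$. $\langle u,v\rangle=v^\dagger u$; $\dagger$ denotes conjugate transpose. *)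

From HB Require Import structures.
From mathcomp Require Import all_boot all_order all_algebra.
From mathcomp Require Import all_classical all_reals all_analysis.
From mathcomp Require Import complex mxtens.
Unset Printing Implicit Defensive.
Import Order.TTheory GRing.Theory Num.Theory.
Local Open Scope ring_scope.
Local Open Scope complex_scope.

Section Model.
Context {R : realType}.
Notation C := (R[i]).

Definition ctr {m p : nat} (M : 'M[C]_(m, p)) : 'M[C]_(p, m) :=
  (map_mx (fun z : C => z^*) M)^T.

Definition herm_pd {N : nat} (M : 'M[C]_N) : Prop :=
  ctr M = M /\
  forall v : 'cV[C]_N, v != 0 -> 0 < complex.Re ((ctr v *m M *m v) 0 0).

(* F(f) = diag(e^{j 2 pi f (k-1)})_{k=1..n}; here k : 'I_n is 0-based, k = (k_paper - 1) *)
Definition Fmx (n : nat) (f : R) : 'M[C]_n :=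
  diag_mx (\row_(k < n) (cos (2 * pi * f * k%:R) +i* sin (2 * pi * f * k%:R))).

Definition Xmx {n lt : nat} (S : 'M[C]_(n, lt)) (f : R) : 'M[C]_(n, lt) :=
  Fmx n f *m S.

(* X-grave(f) = I_{lr} (x) X(f): block diagonal; row index (r,k) at r*n+k,
   column index (r,t) at r*lt+t (0-based), matching the stacking of y and h *)
Definition Xgr (lr : nat) {n lt : nat} (S : 'M[C]_(n, lt)) (f : R)
  : 'M[C]_(lr * n, lr * lt) := (1%:M : 'M[C]_lr) *t Xmx S f.

Definition Sgr (lr : nat) {n lt : nat} (S : 'M[C]_(n, lt))
  : 'M[C]_(lr * n, lr * lt) := (1%:M : 'M[C]_lr) *t S.

Definition rho {n lt : nat} (S : 'M[C]_(n, lt)) : C := n%:R^-1 * \tr (ctr S *m S).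

(* density of the circularly symmetric complex Gaussian CN(m, K) on C^N
   (K Hermitian positive definite, so det K is a positive real number) *)
Definition cn_pdf {N : nat} (m : 'cV[C]_N) (K : 'M[C]_N) (y : 'cV[C]_N) : R :=
  expR (- complex.Re ((ctr (y - m) *m invmx K *m (y - m)) 0 0))
  / (pi ^+ N * complex.Re (\det K)).

(* conditional density f_{y|f_delta}(y | f): given f_delta = f, the vector
   y = Xgr(f) h + n with h ~ CN(mu_h, Sigma_h) and n ~ CN(0, I) independent,
   hence y | f ~ CN(Xgr(f) mu_h, Xgr(f) Sigma_h Xgr(f)^dagger + I). *)
Definition lik (lr : nat) {n lt : nat} (S : 'M[C]_(n, lt))
  (Sigma : 'M[C]_(lr * lt)) (mu : 'cV[C]_(lr * lt)) (f : R)
  (y : 'cV[C]_(lr * n)) : R :=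
  cn_pdf (Xgr lr S f *m mu) (Xgr lr S f *m Sigma *m ctr (Xgr lr S f) + 1%:M) y.

Definition Amx (lr : nat) {n lt : nat} (S : 'M[C]_(n, lt))
  (Sigma : 'M[C]_(lr * lt)) : 'M[C]_(lr * lt) :=
  invmx (ctr (Sgr lr S) *m Sgr lr S + invmx Sigma).

Definition bvec (lr : nat) {n lt : nat} (S : 'M[C]_(n, lt))
  (Sigma : 'M[C]_(lr * lt)) (mu : 'cV[C]_(lr * lt)) : 'cV[C]_(lr * lt) :=
  (1%:M - Amx lr S Sigma *m ctr (Sgr lr S) *m Sgr lr S) *m mu.

(* g(y, f) with the weight [s2inv] playing the role of sigma_f^{-2};
   <u, v> = v^dagger u; the quadratic form (X^dagger y)^dagger A (X^dagger y)
   is real since A is Hermitian, so its real part is taken. *)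
Definition gfun (lr : nat) {n lt : nat} (S : 'M[C]_(n, lt))
  (Sigma : 'M[C]_(lr * lt)) (mu : 'cV[C]_(lr * lt)) (muf s2inv : R)
  (y : 'cV[C]_(lr * n)) (f : R) : R :=
  let v := ctr (Xgr lr S f) *m y in
  2 * complex.Re ((ctr (bvec lr S Sigma mu) *m v) 0 0)
  + complex.Re ((ctr v *m Amx lr S Sigma *m v) 0 0)
  - 2^-1 * s2inv * `|f - muf| ^+ 2.

End Model.

Definition argmax {R : realType} (F : R -> R) : set R :=
  [set x | forall x', F x' <= F x].

(* Given f, the observation is y ~ CN(X(f) mu, X(f) Sigma X(f)^† + I).  As F(f)
   is unitary, X(f)^† X(f) = S^† S and det (X(f) Sigma X(f)^† + I) do not depend
   on f, and by the Woodbury identity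
   (X Sigma X^† + I)^-1 = I - X (X^† X + Sigma^-1)^-1 X^† = I - X A X^†.
   Expanding the exponent, the log-likelihood is g(y, f) (with sigma^-2 = 0) up
   to a constant independent of f, and the Gaussian prior contributes the term
   -(f - mu_f)^2 / (2 sigma^2).  Multiplying by positive constants and composing
   with exp preserves the set of maximisers. *)
From HB Require Import structures.
From mathcomp Require Import all_boot all_order all_algebra.
From mathcomp Require Import all_classical all_reals all_analysis.
From mathcomp Require Import complex mxtens polyrcf.
From mathcomp Require Import ring lra.
Import Order.TTheory GRing.Theory Num.Theory.
Local Open Scope ring_scope.
Local Open Scope complex_scope.
Set Implicit Arguments.
Unset Strict Implicit.

Section Conjugation.
Variable R : realType.
Local Notation C := R[i].

Lemma ctrM m p q (A : 'M[C]_(m, p)) (B : 'M[C]_(p, q)) :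
  ctr (A *m B) = ctr B *m ctr A.
Proof. by rewrite /ctr map_mxM trmx_mul. Qed.

Lemma ctrK m p (A : 'M[C]_(m, p)) : ctr (ctr A) = A.
Proof. by apply/matrixP => i j; rewrite !mxE conjcK. Qed.

Lemma ctr0 m p : ctr (0 : 'M[C]_(m, p)) = 0.
Proof. by apply/matrixP => i j; rewrite !mxE conjc0. Qed.

Lemma ctrD m p (A B : 'M[C]_(m, p)) : ctr (A + B) = ctr A + ctr B.
Proof. by apply/matrixP => i j; rewrite !mxE rmorphD. Qed.

Lemma ctrN m p (A : 'M[C]_(m, p)) : ctr (- A) = - ctr A.
Proof. by apply/matrixP => i j; rewrite !mxE rmorphN. Qed.

Lemma ctrB m p (A B : 'M[C]_(m, p)) : ctr (A - B) = ctr A - ctr B.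
Proof. by rewrite ctrD ctrN. Qed.

Lemma ctr1 m : ctr (1%:M : 'M[C]_m) = 1%:M.
Proof. by apply/matrixP => i j; rewrite !mxE eq_sym rmorph_nat. Qed.

Lemma ctr_invmx m (A : 'M[C]_m) : ctr (invmx A) = invmx (ctr A).
Proof. by rewrite /ctr map_invmx trmx_inv. Qed.

Lemma ctr_tensmx m n p q (A : 'M[C]_(m, n)) (B : 'M[C]_(p, q)) :
  ctr (A *t B) = ctr A *t ctr B.
Proof. by rewrite /ctr map_mxT trmx_tens. Qed.

Lemma ctr_mx11 (w : 'M[C]_1) : ctr w 0 0 = (w 0 0)^*.
Proof. by rewrite !mxE. Qed.

Lemma ReD (x y : C) : complex.Re (x + y) = complex.Re x + complex.Re y.
Proof. by case: x; case: y. Qed.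

Lemma ReN (x : C) : complex.Re (- x) = - complex.Re x.
Proof. by case: x. Qed.

Lemma ReB (x y : C) : complex.Re (x - y) = complex.Re x - complex.Re y.
Proof. by rewrite ReD ReN. Qed.

Lemma ReJ (x : C) : complex.Re x^* = complex.Re x.
Proof. by case: x. Qed.

End Conjugation.

Section PositiveDefinite.
Variable R : realType.
Local Notation C := R[i].

Definition posdef N (M : 'M[C]_N) :=
  forall u : 'cV[C]_N, u != 0 -> 0 < complex.Re ((ctr u *m M *m u) 0 0).

Definition possemidef N (M : 'M[C]_N) :=
  forall u : 'cV[C]_N, 0 <= complex.Re ((ctr u *m M *m u) 0 0).

Lemma cnorm2_ge0 N (w : 'cV[C]_N) : 0 <= (ctr w *m w) 0 0.
Proof. by rewrite mxE; apply: sumr_ge0 => j _; rewrite !mxE mulrC mulcJ_ge0. Qed.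

Lemma cnorm2_gt0 N (w : 'cV[C]_N) : w != 0 -> 0 < (ctr w *m w) 0 0.
Proof.
move=> w_neq0; have [j wj_neq0] : exists j, w j 0 != 0.
  apply/existsP; apply: contraR w_neq0 => /existsPn w0.
  by apply/eqP/matrixP => i k; rewrite [k]ord1 mxE; apply/eqP/negbNE/w0.
rewrite mxE (bigD1 j) //= ltr_pwDl ?sumr_ge0 // => [|i _].
  by rewrite !mxE mulrC lt_def mulcJ_ge0 mulf_neq0 ?conjc_eq0.
by rewrite !mxE mulrC mulcJ_ge0.
Qed.

Lemma quad_form_mulmx N K (B : 'M[C]_(K, N)) (M : 'M[C]_K) (u : 'cV[C]_N) :
  ctr u *m (ctr B *m M *m B) *m u = ctr (B *m u) *m M *m (B *m u).
Proof. by rewrite ctrM !mulmxA. Qed.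

Lemma posdef1 N : posdef (1%:M : 'M[C]_N).
Proof.
move=> u u_neq0; rewrite mulmx1.
by have := cnorm2_gt0 u_neq0; rewrite ltcE => /andP[].
Qed.

Lemma possemidef_scalar N (t : R) : 0 <= t -> possemidef (t%:C%:M : 'M[C]_N).
Proof.
move=> t_ge0 u; rewrite mul_mx_scalar -scalemxAl mxE /=.
have := cnorm2_ge0 u; case: (_ 0 0) => a b; rewrite lecE => /andP[_ /= a_ge0]; nra.
Qed.

Lemma possemidef_gram N K (B : 'M[C]_(K, N)) : possemidef (ctr B *m B).
Proof.
move=> u; rewrite -(mulmx1 (ctr B)) quad_form_mulmx mulmx1.
by have := cnorm2_ge0 (B *m u); rewrite lecE => /andP[].
Qed.

Lemma possemidef_conj N K (B : 'M[C]_(K, N)) (M : 'M[C]_N) :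
  possemidef M -> possemidef (B *m M *m ctr B).
Proof. by move=> M_psd u; rewrite -{1}(ctrK B) quad_form_mulmx. Qed.

Lemma posdef_addr N (M P : 'M[C]_N) :
  posdef M -> possemidef P -> posdef (M + P).
Proof.
move=> M_pd P_psd u u_neq0.
rewrite mulmxDr mulmxDl mxE ReD.
exact: ltr_wpDr (P_psd u) (M_pd u u_neq0).
Qed.

Lemma posdefW N (M : 'M[C]_N) : posdef M -> possemidef M.
Proof.
move=> M_pd u; have [->|/M_pd/ltW//] := eqVneq u 0.
by rewrite mulmx0 mxE.
Qed.

Lemma posdef_unitmx N (M : 'M[C]_N) : posdef M -> M \in unitmx.
Proof.
move=> M_pd; rewrite unitmxE unitfE; apply/negP => /det0P[v v_neq0 vM0].
have ctrv_neq0 : ctr v != 0.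
  by apply: contra v_neq0 => /eqP v0; rewrite -[v]ctrK v0 ctr0.
by have := M_pd _ ctrv_neq0; rewrite ctrK vM0 mul0mx mxE ltxx.
Qed.

Lemma posdef_invmx N (M : 'M[C]_N) : ctr M = M -> posdef M -> posdef (invmx M).
Proof.
move=> M_herm M_pd u u_neq0; have M_unit := posdef_unitmx M_pd.
have -> : u = M *m (invmx M *m u) by rewrite mulKVmx.
rewrite ctrM M_herm -!mulmxA (mulmxA M) mulmxV // mul1mx mulmxA.
apply: M_pd; apply: contra u_neq0 => /eqP w0.
by rewrite -(mulKVmx M_unit u) w0 mulmx0.
Qed.

End PositiveDefinite.

Lemma char_poly_trmx (F : comNzRingType) N (A : 'M[F]_N) :
  char_poly A^T = char_poly A.
Proof.
rewrite /char_poly -det_tr; congr (\det _); apply/matrixP => i j.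
by rewrite !mxE eq_sym.
Qed.

Lemma horner_char_poly (F : comNzRingType) N (A : 'M[F]_N) (x : F) :
  (char_poly A).[x] = \det (x%:M - A).
Proof.
rewrite -horner_evalE /char_poly -det_map_mx; congr (\det _).
apply/matrixP => i j; rewrite !mxE /=.
by rewrite horner_evalE hornerD hornerN hornerMn hornerX hornerC.
Qed.

Section Determinant.
Variable R : realType.
Local Notation C := R[i].

Lemma conjc_fixed_polyE (p : {poly C}) :
  map_poly conjc p = p -> p = map_poly (real_complex R) (map_poly (@complex.Re R) p).
Proof.
move=> p_real; apply/polyP => i; rewrite coef_map /= coef_map_id0 //.
have : (p`_i)^* = p`_i by rewrite -[in RHS]p_real coef_map.
case: (p`_i) => a b /eqP; rewrite eq_complex /= => /andP[_ /eqP b0].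
by congr (_ +i* _); lra.
Qed.

(* det K = r.[0] for the real monic polynomial r(t) = det (t + K), which has no
   root on [0, +oo[ since t + K is positive definite there. *)
Lemma det_herm_pd_gt0 N (K : 'M[C]_N) : herm_pd K -> 0 < complex.Re (\det K).
Proof.
move=> [K_herm K_pd].
pose p := char_poly (- K).
have p_eval x : p.[x] = \det (x%:M + K) by rewrite horner_char_poly opprK.
have p_real : map_poly conjc p = p.
  rewrite map_char_poly -char_poly_trmx; congr char_poly.
  by rewrite map_mxN -[in RHS]K_herm /ctr linearN.
pose r := map_poly (@complex.Re R) p.
have r_eval (t : R) : \det (t%:C%:M + K) = (r.[t])%:C.
  by rewrite -p_eval {1}(conjc_fixed_polyE p_real) horner_map.
have r_lead : lead_coef r = 1.
  have := char_poly_monic (- K); rewrite -/p qualifE /= => /eqP.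
  by rewrite (conjc_fixed_polyE p_real) lead_coef_map => /(congr1 (@complex.Re R)).
have r_noroot : {in `[0, +oo[, forall t, ~~ root r t}.
  move=> t; rewrite in_itv /= andbT => t_ge0.
  have : posdef (K + t%:C%:M) by apply: posdef_addr; last exact: possemidef_scalar.
  move/posdef_unitmx; rewrite addrC unitmxE unitfE r_eval /root.
  by apply: contra => /eqP ->.
have := sgp_pinftyP r_noroot (_ : 0 \in `[0, +oo[).
rewrite /sgp_pinfty r_lead sgr1 in_itv /= lexx => /(_ isT) /eqP.
have -> : \det K = (r.[0])%:C by rewrite -r_eval rmorph0 add0r.
by rewrite sgr_cp0.
Qed.

End Determinant.

Section Woodbury.
Variables (F : comUnitRingType) (p q : nat).
Variables (X : 'M[F]_(p, q)) (Y : 'M[F]_(q, p)) (Sg : 'M[F]_q).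
Hypotheses (Sg_unit : Sg \in unitmx) (core_unit : Y *m X + invmx Sg \in unitmx).
Local Notation A := (invmx (Y *m X + invmx Sg)).

Lemma woodbury_mulmx : (X *m Sg *m Y + 1%:M) *m (1%:M - X *m A *m Y) = 1%:M.
Proof.
have YXA : Y *m X *m A = 1%:M - invmx Sg *m A.
  by rewrite -(mulmxV core_unit) mulmxDl addrK.
have SgYXA : Sg *m (Y *m X *m A) = Sg - A.
  by rewrite YXA mulmxBr mulmx1 mulmxA mulmxV // mul1mx.
have middle : X *m Sg *m Y *m (X *m A *m Y) = X *m Sg *m Y - X *m A *m Y.
  by rewrite -mulmxBl -mulmxBr -SgYXA !mulmxA.
rewrite mulmxDl mul1mx mulmxBr mulmx1 middle.
by rewrite opprB [X *m Sg *m Y + _]addrCA subrr addr0 addrC subrK.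
Qed.

Lemma woodbury_invmx : invmx (X *m Sg *m Y + 1%:M) = 1%:M - X *m A *m Y.
Proof.
have [K_unit _] := mulmx1_unit woodbury_mulmx.
by rewrite -[RHS](mulKmx K_unit) woodbury_mulmx mulmx1.
Qed.

End Woodbury.

Section QuadraticForm.
Variable R : realType.
Local Notation C := R[i].

Lemma quad_form_residualE p q (X : 'M[C]_(p, q)) (A : 'M[C]_q)
    (y : 'cV[C]_p) (mu : 'cV[C]_q) : ctr A = A ->
  ctr (y - X *m mu) *m (1%:M - X *m A *m ctr X) *m (y - X *m mu)
  = ctr y *m y - ctr (ctr X *m y) *m A *m (ctr X *m y)
    - ctr (ctr X *m y) *m ((1%:M - A *m (ctr X *m X)) *m mu)
    - ctr ((1%:M - A *m (ctr X *m X)) *m mu) *m (ctr X *m y)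
    + ctr mu *m (ctr X *m X - ctr X *m X *m A *m (ctr X *m X)) *m mu.
Proof.
move=> A_herm; set P := 1%:M - _; set v := ctr X *m y.
set b := (1%:M - A *m (ctr X *m X)) *m mu.
have PX : P *m X = X *m (1%:M - A *m (ctr X *m X)).
  by rewrite mulmxBl mul1mx mulmxBr mulmx1 !mulmxA.
have ctrXP : ctr X *m P = ctr (1%:M - A *m (ctr X *m X)) *m ctr X.
  by rewrite ctrB ctr1 !ctrM ctrK A_herm mulmxBr mulmx1 mulmxBl mul1mx !mulmxA.
have yPy : ctr y *m P *m y = ctr y *m y - ctr v *m A *m v.
  by rewrite mulmxBr mulmx1 mulmxBl ctrM ctrK !mulmxA.
have yPXmu : ctr y *m P *m (X *m mu) = ctr v *m b.
  by rewrite -mulmxA (mulmxA P) PX ctrM ctrK !mulmxA.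
have XmuPy : ctr (X *m mu) *m P *m y = ctr b *m v.
  by rewrite ctrM -(mulmxA (ctr mu)) ctrXP /b ctrM !mulmxA.
have XmuPXmu : ctr (X *m mu) *m P *m (X *m mu)
    = ctr mu *m (ctr X *m X - ctr X *m X *m A *m (ctr X *m X)) *m mu.
  by rewrite ctrM -(mulmxA (ctr mu)) ctrXP ctrB ctr1 ctrM ctrM ctrK A_herm
    mulmxBl mul1mx !mulmxBr !mulmxBl !mulmxA.
clearbody P v b.
rewrite ctrB [in LHS]mulmxBl [in LHS]mulmxBl ![in LHS]mulmxBr.
by rewrite yPy yPXmu XmuPy XmuPXmu opprB addrA addrAC.
Qed.

End QuadraticForm.

Lemma tens1mx_scalar (F : comPzRingType) m p (c : F) :
  (1%:M : 'M[F]_m) *t (c%:M : 'M[F]_p) = c%:M.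
Proof.
apply/matrixP => i j.
case: (mxtens_indexP i) => i0 i1; case: (mxtens_indexP j) => j0 j1.
rewrite tensmxE !mxE (inj_eq (can_inj (@mxtens_indexK _ _))) xpair_eqE.
by case: eqP; case: eqP => _ _ /=; rewrite ?mul1r ?mul0r ?mulr0n.
Qed.

Section Channel.
Variable R : realType.
Local Notation C := R[i].

Lemma cis_mulJ (t : R) : (cos t +i* sin t) * (cos t +i* sin t)^* = 1 :> C.
Proof.
apply/eqP; rewrite eq_complex /=; apply/andP; split; apply/eqP; last by ring.
by rewrite -(cos2Dsin2 t); ring.
Qed.

Lemma Fmx_unitary n f : Fmx n f *m ctr (Fmx n f) = 1%:M :> 'M[C]_n.
Proof.
apply/matrixP => i j; rewrite /Fmx mul_diag_mx !mxE eq_sym.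
by case: eqP => [->|_]; rewrite ?mulr1n ?cis_mulJ // !mulr0n conjc0 mulr0.
Qed.

Definition Fgr lr n f : 'M[C]_(lr * n) := (1%:M : 'M[C]_lr) *t Fmx n f.

Lemma Fgr_unitary lr n f : Fgr lr n f *m ctr (Fgr lr n f) = 1%:M.
Proof.
by rewrite /Fgr ctr_tensmx ctr1 tensmx_mul mulmx1 Fmx_unitary tens1mx_scalar.
Qed.

Variables (lr n lt : nat) (S : 'M[C]_(n, lt)).

Lemma XgrE f : Xgr lr S f = Fgr lr n f *m Sgr lr S.
Proof. by rewrite /Xgr /Sgr /Xmx /Fgr tensmx_mul mulmx1. Qed.

Lemma Sgr_gram : ctr (Sgr lr S) *m Sgr lr S = 1%:M *t (ctr S *m S).
Proof. by rewrite /Sgr ctr_tensmx ctr1 tensmx_mul mulmx1. Qed.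

Lemma Xgr_gram f : ctr (Xgr lr S f) *m Xgr lr S f = ctr (Sgr lr S) *m Sgr lr S.
Proof.
rewrite XgrE ctrM mulmxA -(mulmxA (ctr (Sgr lr S))).
by rewrite (mulmx1C (Fgr_unitary _ _ _)) mulmx1.
Qed.

Lemma det_Xgr_cov (Sigma : 'M[C]_(lr * lt)) f :
  \det (Xgr lr S f *m Sigma *m ctr (Xgr lr S f) + 1%:M)
  = \det (Sgr lr S *m Sigma *m ctr (Sgr lr S) + 1%:M).
Proof.
set F := Fgr lr n f.
have -> : Xgr lr S f *m Sigma *m ctr (Xgr lr S f) + 1%:M
        = F *m (Sgr lr S *m Sigma *m ctr (Sgr lr S) + 1%:M) *m ctr F.
  by rewrite XgrE ctrM mulmxDr mulmxDl mulmx1 Fgr_unitary !mulmxA.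
by rewrite !det_mulmx mulrAC -det_mulmx Fgr_unitary det1 mul1r.
Qed.

End Channel.

Section Likelihood.
Variables (R : realType) (lr n lt : nat).
Local Notation C := R[i].
Variables (S : 'M[C]_(n, lt)) (Sigma : 'M[C]_(lr * lt)) (mu : 'cV[C]_(lr * lt)).
Hypothesis Sigma_hpd : herm_pd Sigma.
Local Notation G := (ctr (Sgr lr S) *m Sgr lr S).
Local Notation A := (Amx lr S Sigma).

Lemma Amx_herm : ctr A = A.
Proof.
case: Sigma_hpd => Sigma_herm _.
by rewrite /Amx ctr_invmx ctrD ctrM ctrK ctr_invmx Sigma_herm.
Qed.

Lemma Amx_core_unit : G + invmx Sigma \in unitmx.
Proof.
case: Sigma_hpd => Sigma_herm Sigma_pd; apply: posdef_unitmx.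
by rewrite addrC; apply: posdef_addr (possemidef_gram _); apply: posdef_invmx.
Qed.

Lemma bvecE : bvec lr S Sigma mu = (1%:M - A *m G) *m mu.
Proof. by rewrite /bvec mulmxA. Qed.

Definition lik_norm :=
  pi ^+ (lr * n) * complex.Re (\det (Sgr lr S *m Sigma *m ctr (Sgr lr S) + 1%:M)).

Lemma lik_norm_gt0 : 0 < lik_norm.
Proof.
case: Sigma_hpd => Sigma_herm Sigma_pd.
rewrite mulr_gt0 ?exprn_gt0 ?pi_gt0 // det_herm_pd_gt0 //; split.
  by rewrite ctrD ctr1 !ctrM ctrK Sigma_herm !mulmxA.
rewrite addrC; apply: posdef_addr; first exact: posdef1.
exact/possemidef_conj/posdefW.
Qed.

Lemma gfun_weight muf s2inv y f :
  gfun lr S Sigma mu muf s2inv y f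
  = gfun lr S Sigma mu muf 0 y f - 2^-1 * s2inv * `|f - muf| ^+ 2.
Proof. by rewrite /gfun mulr0 mul0r subr0. Qed.

Definition lik_shift (y : 'cV[C]_(lr * n)) :=
  - complex.Re ((ctr y *m y) 0 0)
  - complex.Re ((ctr mu *m (G - G *m A *m G) *m mu) 0 0).

Lemma likE muf y f :
  lik lr S Sigma mu f y
  = lik_norm^-1 * expR (gfun lr S Sigma mu muf 0 y f + lik_shift y).
Proof.
have Sigma_unit : Sigma \in unitmx by apply: posdef_unitmx; case: Sigma_hpd.
have core_unit := Amx_core_unit; rewrite -(Xgr_gram _ _ f) in core_unit.
rewrite /lik /cn_pdf det_Xgr_cov -/lik_norm mulrC; congr (_ * expR _).
rewrite woodbury_invmx // quad_form_residualE Xgr_gram ?Amx_herm //.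
rewrite /gfun /lik_shift bvecE; set v := ctr (Xgr lr S f) *m y.
set b := (1%:M - A *m G) *m mu.
have vb_conj : (ctr v *m b) 0 0 = ((ctr b *m v) 0 0)^* by rewrite -ctr_mx11 ctrM ctrK.
rewrite -[invmx (G + invmx Sigma)]/A; move: vb_conj.
move: (ctr y *m y) (ctr v *m A *m v) (ctr v *m b) (ctr b *m v) (ctr mu *m _ *m mu).
move=> yy vAv vb bv muGmu vb_conj.
rewrite !mxE vb_conj !(ReD, ReB, ReN, ReJ) mulr0 mul0r.
ring.
Qed.

Lemma lik_normal_pdfE muf sigf : sigf != 0 -> forall y f,
  lik lr S Sigma mu f y * normal_pdf muf sigf f
  = lik_norm^-1 * normal_peak sigf
    * expR (gfun lr S Sigma mu muf (sigf ^- 2) y f + lik_shift y).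
Proof.
move=> sigf_neq0 y f; rewrite (likE muf) normal_pdfE // /normal_fun [in RHS]gfun_weight.
set g0 := gfun _ _ _ _ _ _ _ _; set c := lik_shift y.
have -> : g0 - 2^-1 * sigf ^- 2 * `|f - muf| ^+ 2 + c
        = g0 + c + - (f - muf) ^+ 2 / (sigf ^+ 2 *+ 2).
  by rewrite real_normK ?num_real // -mulr_natr; field.
by rewrite [in RHS]expRD mulrACA.
Qed.

End Likelihood.

Lemma argmax_mul_expR (R : realType) (F g : R -> R) (k c : R) : 0 < k ->
  (forall x, F x = k * expR (g x + c)) -> argmax F = argmax g.
Proof.
move=> k_gt0 FE; apply/seteqP; split => x /= x_max x'; have := x_max x';
  by rewrite !FE ler_pM2l // ler_expR lerD2r.
Qed.

Unset Implicit Arguments.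

Theorem theorem1 (R : realType) (lt lr n : nat)
  (S : 'M[R[i]]_(n, lt)) (Sigma : 'M[R[i]]_(lr * lt)) (mu : 'cV[R[i]]_(lr * lt))
  (muf sigf : R) :
  (0 < lt)%N -> (0 < lr)%N -> (0 < n)%N ->
  herm_pd Sigma -> 0 < sigf ->
  [/\ (* A and b do not depend on f_delta *)
      (forall f : R,
         (1%:M - Amx lr S Sigma *m ctr (Xgr lr S f) *m Xgr lr S f) *m mu
         = bvec lr S Sigma mu),
      (* special form of A for orthogonal pilots *)
      (ctr S *m S = (n%:R * rho S / lt%:R)%:M ->
         Amx lr S Sigma = invmx (invmx Sigma + (n%:R * rho S / lt%:R)%:M)),
      (* MAP estimator *)
      (forall y : 'cV[R[i]]_(lr * n),
         argmax (fun f => lik lr S Sigma mu f y * normal_pdf muf sigf f)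
         = argmax (gfun lr S Sigma mu muf (sigf ^- 2) y))
    & (* ML estimator *)
      (forall y : 'cV[R[i]]_(lr * n),
         argmax (fun f => lik lr S Sigma mu f y)
         = argmax (gfun lr S Sigma mu muf 0 y))].
Proof.
move=> _ _ _ Sigma_hpd sigf_gt0; have sigf_neq0 : sigf != 0 by rewrite gt_eqF.
have lik_norm_gt0 := lik_norm_gt0 S Sigma_hpd.
split.
- by move=> f; rewrite -(mulmxA (Amx _ _ _)) Xgr_gram bvecE.
- by move=> SS; rewrite /Amx Sgr_gram SS tens1mx_scalar addrC.
- move=> y; apply: argmax_mul_expR (lik_normal_pdfE S mu Sigma_hpd muf sigf_neq0 y).
  by apply: mulr_gt0; [rewrite invr_gt0 | exact: normal_peak_gt0].
- move=> y; apply: argmax_mul_expR (likE S mu Sigma_hpd muf y).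
  by rewrite invr_gt0.
Qed.
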